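(* Let $f$ be a WTP function with reward function $F$. For any $\tilde x\in\widetilde{\mathcal{X}}_\ell$, any $\tilde y\in\widetilde{\mathcal{Y}}_{\mathcal{M}}(\tilde x)$ and any contention resolution scheme $\phi$ for $\mathcal{M}$, $$\mathbb{E}_{x\sim\Xi(\tilde x)}[F(x)]\ \ge\ \mathbb{E}_{x\sim\Xi(\tilde x)}\Big[\mathbb{E}_{y\sim\phi(Q(\tilde y,\tilde x,x))}[f(y)]\Big].$$
   Context: $\mathcal{M}=([n],\mathcal{I})$ is a matroid (identified with characteristic vectors of independent sets), $\mathcal{P}(\mathcal{M})$ its matroid polytope. $\mathcal{X}_\ell=\{x\in\{0,1\}^n:\sum_ix_i\le\ell\}$, $\widetilde{\mathcal{X}}_\ell=\{\tilde x\in[0,1]^n:\sum_i\tilde x_i\le\ell\}$, $\mathcal{Y}_{\mathcal{M}}(x)=\{y\in\{0,1\}^n:y\in\mathcal{M},y\le x\}$, $\widetilde{\mathcal{Y}}_{\mathcal{M}}(\tilde x)=\{\tilde y\in[0,1]^n:\tilde y\in\mathcal{P}(\mathcal{M}),\tilde y\le\tilde x\}$. A WTP function is $f(y)=\sum_{j\in\mathcal{C}}c_j\min\{b_j,y\cdot w_j\}$ ($\mathcal{C}$ finite, $c_j>0$, $b_j\in\mathbb{R}_{\ge0}\cup\{\infty\}$, $w_j\in\mathbb{R}^n_{\ge0}$), and $F(x)=\max_{y\in\mathcal{Y}_{\mathcal{M}}(x)}f(y)$. $\Xi$ is randomized pipage rounding (Chekuri–Vondrák–Zenklusen 2009) from $\widetilde{\mathcal{X}}_\ell$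 to $\mathcal{X}_\ell$: repeatedly pick two fractional coordinates $i,j$, set $\epsilon_1=\min(1-\tilde x_i,\tilde x_j)$, $\epsilon_2=\min(\tilde x_i,1-\tilde x_j)$, and with probability $\epsilon_2/(\epsilon_1+\epsilon_2)$ move to $(\tilde x_i+\epsilon_1,\tilde x_j-\epsilon_1)$, else to $(\tilde x_i-\epsilon_2,\tilde x_j+\epsilon_2)$, until integral (a lone fractional coordinate is handled as in that reference). The randomized map $Q(\tilde y,\tilde x,x)$: $a_i=\tilde y_i/\tilde x_i$ if $\tilde x_i\ne0$, else $0$; independent $c_i\sim\mathrm{Bernoulli}(a_i)$; output $\hat y$ with $\hat y_i=1$ iff $x_i=1$ and $c_i=1$. A contention resolution scheme for $\mathcal{M}$ is a randomized $\phi:\{0,1\}^n\to\mathcal{I}$ with $\phi(z)\le z$. *)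

From HB Require Import structures.
From mathcomp Require Import all_boot all_order all_algebra.
Set Implicit Arguments. Unset Strict Implicit. Unset Printing Implicit Defensive.
Import Order.TTheory GRing.Theory Num.Theory.
Local Open Scope ring_scope.

(* 0/1 vectors in {0,1}^n are identified with subsets of 'I_n. *)

Definition is_matroid (n : nat) (I : {set {set 'I_n}}) : Prop :=
  [/\ set0 \in I,
      (forall A B : {set 'I_n}, B \in I -> A \subset B -> A \in I) &
      (forall A B : {set 'I_n}, A \in I -> B \in I -> (#|A| < #|B|)%N ->
         exists2 e, e \in B :\: A & e |: A \in I)].

Definition in_matroid_polytope (R : realFieldType) (n : nat)
  (I : {set {set 'I_n}}) (yt : 'I_n -> R) : Prop :=
  exists lam : {set 'I_n} -> R,
    [/\ forall S, 0 <= lam S,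
        forall S, S \notin I -> lam S = 0,
        \sum_(S : {set 'I_n}) lam S = 1 &
        forall i, yt i = \sum_(S : {set 'I_n}) lam S * (i \in S)%:R].

Definition in_frac_card (R : realFieldType) (n l : nat) (xt : 'I_n -> R) : Prop :=
  (forall i, 0 <= xt i <= 1) /\ \sum_i xt i <= l%:R.

Definition in_frac_Y (R : realFieldType) (n : nat) (I : {set {set 'I_n}})
  (xt yt : 'I_n -> R) : Prop :=
  (forall i, 0 <= yt i <= 1) /\ in_matroid_polytope I yt /\ (forall i, yt i <= xt i).

(* WTP function: C = 'I_m, b j = None encodes b_j = +oo. *)
Definition is_WTP (R : realFieldType) (n m : nat) (c : 'I_m -> R)
  (b : 'I_m -> option R) (w : 'I_m -> 'I_n -> R) : Prop :=
  [/\ forall j, 0 < c j,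
      forall j, (if b j is Some bj then 0 <= bj else true) &
      forall j i, 0 <= w j i].

Definition WTP (R : realFieldType) (n m : nat) (c : 'I_m -> R)
  (b : 'I_m -> option R) (w : 'I_m -> 'I_n -> R) (y : {set 'I_n}) : R :=
  \sum_(j < m) c j *
    (let s := \sum_(i in y) w j i in
     if b j is Some bj then Num.min bj s else s).

(* F(x) = max over y in Y_M(x) = {y in I, y <= x} of f(y); this set is
   nonempty (contains the empty set) and f >= 0, so the default 0 is harmless. *)
Definition reward (R : realFieldType) (n : nat) (I : {set {set 'I_n}})
  (f : {set 'I_n} -> R) (x : {set 'I_n}) : R :=
  \big[Num.max/0]_(y in I | y \subset x) f y.

Definition fractional (R : realFieldType) (r : R) : bool := (0 < r) && (r < 1).
Definition integral (R : realFieldType) (r : R) : bool := (r == 0) || (r == 1).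

Definition ones (R : realFieldType) (n : nat) (xt : 'I_n -> R) : {set 'I_n} :=
  [set k | xt k == 1].

Definition dirac {R : realFieldType} (n : nat) (S0 : {set 'I_n}) : {set 'I_n} -> R :=
  fun S => (S == S0)%:R.

Definition move2 (R : realFieldType) (n : nat) (xt : 'I_n -> R) (i j : 'I_n) (e : R)
  : 'I_n -> R :=
  fun k => if k == i then xt i + e else if k == j then xt j - e else xt k.

(* Pipage xt D : D is an output distribution of randomized pipage rounding
   started from xt (for some choice of the pairs picked at each step). *)
Inductive Pipage (R : realFieldType) (n : nat) : ('I_n -> R) -> ({set 'I_n} -> R) -> Prop :=
| Pipage_int (xt : 'I_n -> R) :
    (forall k, integral (xt k)) -> Pipage xt (dirac (ones xt))
| Pipage_lone (xt : 'I_n -> R) (i : 'I_n) :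
    fractional (xt i) -> (forall k, k != i -> integral (xt k)) ->
    Pipage xt (fun S => xt i * dirac (i |: ones xt) S + (1 - xt i) * dirac (ones xt) S)
| Pipage_step (xt : 'I_n -> R) (i j : 'I_n) (D1 D2 : {set 'I_n} -> R) :
    i != j -> fractional (xt i) -> fractional (xt j) ->
    let e1 := Num.min (1 - xt i) (xt j) in
    let e2 := Num.min (xt i) (1 - xt j) in
    Pipage (move2 xt i j e1) D1 ->
    Pipage (move2 xt i j (- e2)) D2 ->
    Pipage xt (fun S => (e2 / (e1 + e2)) * D1 S + (e1 / (e1 + e2)) * D2 S).

(* Q(yt, xt, x): distribution of yhat, yhat_i = 1 iff x_i = 1 and c_i = 1,
   c_i ~ Bernoulli(a_i) independent. *)
Definition Qa (R : realFieldType) (n : nat) (yt xt : 'I_n -> R) (i : 'I_n) : R :=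
  if xt i != 0 then yt i / xt i else 0.

Definition Qdist (R : realFieldType) (n : nat) (yt xt : 'I_n -> R) (x : {set 'I_n})
  : {set 'I_n} -> R :=
  fun yh => \prod_(i < n)
    (let p := (i \in x)%:R * Qa yt xt i in if i \in yh then p else 1 - p).

Definition is_CRS (R : realFieldType) (n : nat) (I : {set {set 'I_n}})
  (phi : {set 'I_n} -> {set 'I_n} -> R) : Prop :=
  forall z : {set 'I_n},
    [/\ forall y, 0 <= phi z y,
        \sum_(y : {set 'I_n}) phi z y = 1 &
        forall y, phi z y != 0 -> (y \in I) && (y \subset z)].

(** For every fixed outcome [x] of pipage rounding the inner expectation is
    at most [F(x)]: the rounding [Q(yt, xt, x)] only keeps elements of [x], and
    the contention resolution scheme then outputs an independent subset of
    that, so every set [y] charged with positive probability is feasible for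
    the maximum defining [F(x)].  Averaging this pointwise bound over the
    (nonnegative) pipage distribution gives the claim. *)
From mathcomp Require Import all_boot all_order all_algebra.
Set Implicit Arguments. Unset Strict Implicit. Unset Printing Implicit Defensive.
Import Order.TTheory GRing.Theory Num.Theory.
Local Open Scope ring_scope.

Section Expectation.
Variables (R : realFieldType) (T : finType).

Lemma expect_le_of_support (P f : T -> R) (r : R) :
  (forall t, 0 <= P t) -> \sum_t P t = 1 ->
  (forall t, P t != 0 -> f t <= r) ->
  \sum_t P t * f t <= r.
Proof.
move=> P_ge0 P_sum1 f_le.
apply: (@le_trans _ _ (\sum_t P t * r)); last by rewrite -mulr_suml P_sum1 mul1r.
apply: ler_sum => t _; have [->|Pt_neq0] := eqVneq (P t) 0; first by rewrite !mul0r.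
by rewrite ler_wpM2l ?P_ge0 ?f_le.
Qed.

End Expectation.

Lemma pipage_ge0 (R : realFieldType) (n : nat) (xt : 'I_n -> R) D :
  Pipage xt D -> forall S, 0 <= D S.
Proof.
elim=> {xt D}.
- by move=> xt _ S; rewrite /dirac ler0n.
- move=> xt i /andP[xi_gt0 xi_lt1] _ S.
  by rewrite addr_ge0 ?mulr_ge0 ?ler0n ?subr_ge0 ?ltW.
- move=> xt i j D1 D2 _ /andP[xi_gt0 xi_lt1] /andP[xj_gt0 xj_lt1] e1 e2
    _ D1_ge0 _ D2_ge0 S.
  have e1_ge0 : 0 <= e1 by rewrite le_min subr_ge0 !ltW.
  have e2_ge0 : 0 <= e2 by rewrite le_min subr_ge0 !ltW.
  by rewrite addr_ge0 ?mulr_ge0 ?invr_ge0 ?addr_ge0.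
Qed.

Section ProductBernoulli.
Variables (R : realFieldType) (n : nat) (p : 'I_n -> R).

Definition prod_bernoulli (z : {set 'I_n}) : R :=
  \prod_(i < n) (if i \in z then p i else 1 - p i).

Lemma prod_bernoulli_sum1 : \sum_(z : {set 'I_n}) prod_bernoulli z = 1.
Proof.
have prod_sum1 : \prod_(i < n) \sum_(b : bool) (if b then p i else 1 - p i) = 1.
  by rewrite big1 // => i _; rewrite big_bool /= addrC subrK.
rewrite -[RHS]prod_sum1 bigA_distr_bigA.
rewrite (reindex (fun f : {ffun 'I_n -> bool} => [set i | f i])) /=.
  by apply: eq_bigr => f _; apply: eq_bigr => i _; rewrite inE.
exists (fun z : {set 'I_n} => [ffun i => i \in z]) => [f _|z _].
  by apply/ffunP => i; rewrite ffunE inE.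
by apply/setP => i; rewrite inE ffunE.
Qed.

Lemma prod_bernoulli_ge0 z : (forall i, 0 <= p i <= 1) -> 0 <= prod_bernoulli z.
Proof.
move=> p_bnd; apply: prodr_ge0 => i _; case/andP: (p_bnd i) => pi_ge0 pi_le1.
by case: (i \in z); rewrite ?subr_ge0.
Qed.

Lemma prod_bernoulli_support z i :
  prod_bernoulli z != 0 -> i \in z -> p i != 0.
Proof.
move=> + iz; apply: contraNneq => pi0.
by rewrite /prod_bernoulli (bigD1 i) //= iz pi0 mul0r.
Qed.

End ProductBernoulli.

Section Rounding.
Variables (R : realFieldType) (n : nat) (yt xt : 'I_n -> R) (x : {set 'I_n}).

Lemma QdistE :
  Qdist yt xt x = prod_bernoulli (fun i => (i \in x)%:R * Qa yt xt i).
Proof. by []. Qed.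

Lemma Qa_in01 i : 0 <= yt i <= xt i -> 0 <= Qa yt xt i <= 1.
Proof.
case/andP=> yi_ge0 yi_le_xi; rewrite /Qa.
have [xi0|xi_neq0] := eqVneq (xt i) 0; first by rewrite lexx ler01.
have xi_gt0 : 0 < xt i by rewrite lt_def xi_neq0 (le_trans yi_ge0).
by rewrite /= divr_ge0 ?(ltW xi_gt0) //= ler_pdivrMr // mul1r.
Qed.

Lemma Qdist_ge0 z :
  (forall i, 0 <= yt i <= xt i) -> 0 <= Qdist yt xt x z.
Proof.
move=> yt_in01; apply: prod_bernoulli_ge0 => i.
case/andP: (Qa_in01 (yt_in01 i)) => a_ge0 a_le1.
by case: (i \in x); rewrite ?mul1r ?mul0r ?a_ge0 ?a_le1 ?lexx ?ler01.
Qed.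

Lemma Qdist_support z : Qdist yt xt x z != 0 -> z \subset x.
Proof.
move=> Qz_neq0; apply/subsetP => i /(prod_bernoulli_support Qz_neq0).
by apply: contraR => /negbTE->; rewrite mul0r.
Qed.

End Rounding.

Section Reward.
Variables (R : realFieldType) (n : nat) (I : {set {set 'I_n}}).
Variables (f : {set 'I_n} -> R) (x : {set 'I_n}).

Lemma reward_ge y : y \in I -> y \subset x -> f y <= reward I f x.
Proof. by move=> yI yx; apply: le_bigmax_cond; rewrite yI yx. Qed.

Lemma CRS_expect_le_reward phi (z : {set 'I_n}) :
  is_CRS I phi -> z \subset x -> \sum_y phi z y * f y <= reward I f x.
Proof.
move=> phi_CRS zx; case: (phi_CRS z) => phi_ge0 phi_sum1 phi_support.
apply: expect_le_of_support => // y /phi_support/andP[yI yz].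
exact: reward_ge yI (subset_trans yz zx).
Qed.

End Reward.

Theorem lemma12 (R : realFieldType) (n l m : nat) (I : {set {set 'I_n}})
  (c : 'I_m -> R) (b : 'I_m -> option R) (w : 'I_m -> 'I_n -> R)
  (xt yt : 'I_n -> R) (phi : {set 'I_n} -> {set 'I_n} -> R)
  (D : {set 'I_n} -> R) :
  is_matroid I ->
  is_WTP c b w ->
  in_frac_card l xt ->
  in_frac_Y I xt yt ->
  is_CRS I phi ->
  Pipage xt D ->
  \sum_(x : {set 'I_n}) D x * reward I (WTP c b w) x >=
  \sum_(x : {set 'I_n}) D x *
     (\sum_(z : {set 'I_n}) Qdist yt xt x z *
        (\sum_(y : {set 'I_n}) phi z y * WTP c b w y)).
Proof.
move=> _ _ _ [yt_in01 [_ yt_le_xt]] phi_CRS D_pipage.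
have yt_between i : 0 <= yt i <= xt i.
  by case/andP: (yt_in01 i) => yi_ge0 _; rewrite yi_ge0 yt_le_xt.
apply: ler_sum => x _; rewrite ler_wpM2l ?(pipage_ge0 D_pipage) //.
apply: expect_le_of_support => [z||z /Qdist_support zx].
- exact: Qdist_ge0.
- by rewrite QdistE prod_bernoulli_sum1.
- exact: CRS_expect_le_reward.
Qed.
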